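(* Let $\epsilon>0$ be sufficiently small, and for $(\phi,\theta)$ spherical-polar coordinates on $S^2$ let $L_s(\phi,\theta)\in R(T^2,2)$ be as defined in the context, with $\nu=\epsilon\sin\phi$ and $D=\cos^2\nu+\sin^2\nu\sin^2\theta$. On the set $\{y\neq0\}=\{\phi\in(0,\pi),\ \theta\notin\{0,\pi\}\}$ the map $(\phi,\theta)\mapsto L_s(\phi,\theta)$ is injective and takes values in $P_4$. Moreover, writing $\hat a,\hat b$ for the unit vectors with $a=i\hat a\cdot\vec\sigma$, $b=i\hat b\cdot\vec\sigma$ in the normalized representative of $L_s(\phi,\theta)$: for $\theta\in(0,\pi)$, $$\hat a=(-\sin(\phi+\nu),-\cos(\phi+\nu),0),$$ $$\hat b=D^{-1}\Big(\cos^2\nu\cos^2\theta\sin(\phi+\nu)+\sin^2\theta\sin(\phi-\nu),\ \cos^2\nu\cos^2\theta\cos(\phi+\nu)+\sin^2\theta\cos(\phi-\nu),\ -\tfrac12\sin 2\nu\sin2\theta\Big),$$ and for $\theta\in(\pi,2\pi)$, $$\hat a=(\sin(\phi+\nu),\cos(\phi+\nu),0),$$ $$\hat b=D^{-1}\Big(-\cos^2\nu\cos^2\theta\sin(\phi+\nu)-\sin^2\theta\sin(\phi-\nu),\ -\cos^2\nu\cos^2\theta\cos(\phi+\nu)-\sin^2\theta\cos(\phi-\nu),\ -\tfrac12\sin 2\nu\sin2\theta\Big).$$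
   Context: Pauli matrices standard; $[A,B]=ABA^{-1}B^{-1}$. $R(T^2,2)$ is the space of tuples $(A,B,a,b)\in SU(2)^4$ with $\operatorname{tr}a=\operatorname{tr}b=0$ and $[A,B]ab=1$ modulo simultaneous conjugation; $\mu([(A,B,a,b)])=\tfrac12\operatorname{tr}[A,B]$; $P_4=\mu^{-1}([-1,1))$. Every class in $P_4$ has a unique (normalized) representative with $A=r\cos\alpha+i\sigma_x\sqrt{1-r^2}+i\sigma_z r\sin\alpha$, $B=\cos\beta+i\sigma_z\sin\beta$, $\alpha\in[0,2\pi]$, $\beta\in(0,\pi)$, $r\in[0,1)$. Cartesian coordinates on $S^2$: $(x,y,z)=(\sin\phi\cos\theta,\sin\phi\sin\theta,\cos\phi)$. Sphere Lagrangian: for small $\epsilon>0$, $\nu=\epsilon\sin\phi$, define $L_s(\phi,\theta)=[(A,B,a,b)]\in R(T^2,2)$ where $a=i\sigma_z$, $h=(\cos^2\nu+\sin^2\nu\sin^2\theta)^{-1/2}(i\sigma_x\cos\nu-i\sigma_z\sin\nu\sin\theta)$, $A=h(\cos\phi+i\sin\phi(\sigma_x\cos\theta+\sigma_y\sin\theta))$, $B=\cos\nu+i\sin\nu(\sigma_x\cos\theta+\sigma_y\sin\theta)$, $b=-ha^{-1}h^{-1}$. (This is the image of the perturbed character variety $R_\pi^\natural(S^1\times D^2,A_1)\cong S^2$ under restriction to the boundary twice-punctured torus.) *)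

From Stdlib Require Import Reals.
Open Scope R_scope.

Record Cx := mkC { Re : R; Im : R }.
Definition CR (r : R) : Cx := mkC r 0.
Definition Ci : Cx := mkC 0 1.
Definition Cadd (z w : Cx) : Cx := mkC (Re z + Re w) (Im z + Im w).
Definition Cmul (z w : Cx) : Cx :=
  mkC (Re z * Re w - Im z * Im w) (Re z * Im w + Im z * Re w).
Definition Copp (z : Cx) : Cx := mkC (- Re z) (- Im z).
Definition Cconj (z : Cx) : Cx := mkC (Re z) (- Im z).
Definition Cinv (z : Cx) : Cx :=
  let n := Re z * Re z + Im z * Im z in mkC (Re z / n) (- Im z / n).

Record M2 := mkM { e11 : Cx; e12 : Cx; e21 : Cx; e22 : Cx }.
Definition Madd (A B : M2) : M2 :=
  mkM (Cadd (e11 A) (e11 B)) (Cadd (e12 A) (e12 B))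
      (Cadd (e21 A) (e21 B)) (Cadd (e22 A) (e22 B)).
Definition Mmul (A B : M2) : M2 :=
  mkM (Cadd (Cmul (e11 A) (e11 B)) (Cmul (e12 A) (e21 B)))
      (Cadd (Cmul (e11 A) (e12 B)) (Cmul (e12 A) (e22 B)))
      (Cadd (Cmul (e21 A) (e11 B)) (Cmul (e22 A) (e21 B)))
      (Cadd (Cmul (e21 A) (e12 B)) (Cmul (e22 A) (e22 B))).
Definition Mscale (c : Cx) (A : M2) : M2 :=
  mkM (Cmul c (e11 A)) (Cmul c (e12 A)) (Cmul c (e21 A)) (Cmul c (e22 A)).
Definition Mid : M2 := mkM (CR 1) (CR 0) (CR 0) (CR 1).
Definition Mdet (A : M2) : Cx :=
  Cadd (Cmul (e11 A) (e22 A)) (Copp (Cmul (e12 A) (e21 A))).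
Definition Mtr (A : M2) : Cx := Cadd (e11 A) (e22 A).
Definition Madj (A : M2) : M2 :=
  mkM (Cconj (e11 A)) (Cconj (e21 A)) (Cconj (e12 A)) (Cconj (e22 A)).
Definition Minv (A : M2) : M2 :=
  Mscale (Cinv (Mdet A)) (mkM (e22 A) (Copp (e12 A)) (Copp (e21 A)) (e11 A)).

Definition is_SU2 (A : M2) : Prop := Mmul A (Madj A) = Mid /\ Mdet A = CR 1.

Definition sigma_x : M2 := mkM (CR 0) (CR 1) (CR 1) (CR 0).
Definition sigma_y : M2 := mkM (CR 0) (Copp Ci) Ci (CR 0).
Definition sigma_z : M2 := mkM (CR 1) (CR 0) (CR 0) (CR (-1)).

Definition isig (x y z : R) : M2 :=
  Mscale Ci (Madd (Mscale (CR x) sigma_x)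
                  (Madd (Mscale (CR y) sigma_y) (Mscale (CR z) sigma_z))).

Definition comm (A B : M2) : M2 := Mmul (Mmul A B) (Mmul (Minv A) (Minv B)).

Record Tup := mkT { tA : M2; tB : M2; ta : M2; tb : M2 }.

(** Membership in (the space of tuples defining) R(T^2,2). *)
Definition in_RT2 (t : Tup) : Prop :=
  is_SU2 (tA t) /\ is_SU2 (tB t) /\ is_SU2 (ta t) /\ is_SU2 (tb t) /\
  Mtr (ta t) = CR 0 /\ Mtr (tb t) = CR 0 /\
  Mmul (Mmul (comm (tA t) (tB t)) (ta t)) (tb t) = Mid.

(** Simultaneous conjugation and the equivalence relation defining R(T^2,2). *)
Definition conjM (g X : M2) : M2 := Mmul (Mmul g X) (Minv g).
Definition conjT (g : M2) (t : Tup) : Tup :=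
  mkT (conjM g (tA t)) (conjM g (tB t)) (conjM g (ta t)) (conjM g (tb t)).
Definition tequiv (t1 t2 : Tup) : Prop :=
  exists g, is_SU2 g /\ conjT g t1 = t2.

(** mu([(A,B,a,b)]) = 1/2 tr [A,B]  (the trace of an SU(2) matrix is real). *)
Definition mu (t : Tup) : R := Re (Mtr (comm (tA t) (tB t))) / 2.
Definition in_P4 (t : Tup) : Prop := in_RT2 t /\ -1 <= mu t < 1.

Definition A_norm (r alpha : R) : M2 :=
  Madd (Mscale (CR (r * cos alpha)) Mid) (isig (sqrt (1 - r ^ 2)) 0 (r * sin alpha)).
Definition B_norm (beta : R) : M2 :=
  Madd (Mscale (CR (cos beta)) Mid) (isig 0 0 (sin beta)).

Definition normalized_rep (t t' : Tup) : Prop :=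
  tequiv t t' /\
  exists alpha beta r, 0 <= alpha <= 2 * PI /\ 0 < beta < PI /\ 0 <= r < 1 /\
    tA t' = A_norm r alpha /\ tB t' = B_norm beta.

Definition L_nu (eps phi : R) : R := eps * sin phi.
Definition L_D (eps phi theta : R) : R :=
  let nu := L_nu eps phi in cos nu ^ 2 + sin nu ^ 2 * sin theta ^ 2.
Definition L_s (eps phi theta : R) : Tup :=
  let nu := L_nu eps phi in
  let a := Mscale Ci sigma_z in
  let h := Mscale (CR (/ sqrt (L_D eps phi theta)))
             (Madd (Mscale (CR (cos nu)) (Mscale Ci sigma_x))
                   (Mscale (CR (- (sin nu * sin theta))) (Mscale Ci sigma_z))) in
  let n := Madd (Mscale (CR (cos theta)) sigma_x) (Mscale (CR (sin theta)) sigma_y) in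
  let A := Mmul h (Madd (Mscale (CR (cos phi)) Mid)
                        (Mscale (Cmul Ci (CR (sin phi))) n)) in
  let B := Madd (Mscale (CR (cos nu)) Mid) (Mscale (Cmul Ci (CR (sin nu))) n) in
  let b := Mscale (CR (-1)) (Mmul (Mmul h (Minv a)) (Minv h)) in
  mkT A B a b.

Definition dom_y_ne0 (phi theta : R) : Prop :=
  0 < phi < PI /\ 0 < theta < 2 * PI /\ theta <> PI.

From Pilot Require Import Defs.
From Stdlib Require Import Reals Lra Nsatz.
Open Scope R_scope.

(** SU(2) is the group of unit quaternions: [qmat] sends a
    quaternion [r + x i + y j + z k] to the matrix [r + i (x sx + y sy + z sz)],
    turning quaternion multiplication into matrix multiplication and the
    quaternion conjugate into the matrix inverse.  Every statement about
    tuples in [R(T^2,2)] is thereby reduced to polynomial identities between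
    real quaternion coordinates, and conjugation by [g] becomes the rotation
    [p |-> g p g^-1] of the imaginary quaternions.

    For fixed [(eps, phi, theta)] the four matrices of [L_s] are
    then written as quaternions; the relation [[A,B] a b = 1] and the formula
    [1 - mu = 2 sin^2 nu sin^2 theta / D] give the values in [P_4]; an
    explicit conjugator (z-rotation, quarter y-turn, z-rotation) produces the
    normalized representative, whose uniqueness comes from the trivial
    stabilizer; finally a conjugacy between two values of [L_s] fixes [a],
    hence is a z-rotation, which the components of [B], [b] and [A] force to
    be trivial, so the parameters agree. *)

Ltac nsatz_pow := cbn [pow] in *; nsatz.

Ltac split_fields :=
  repeat match goal with
  | |- mkM _ _ _ _ = mkM _ _ _ _ => f_equal
  | |- mkC _ _ = mkC _ _ => f_equal
  end.

(** ** Quaternions as a model of SU(2) *)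

Record quat := Quat { qr : R; qi : R; qj : R; qk : R }.

Ltac split_quat :=
  repeat match goal with |- Quat _ _ _ _ = Quat _ _ _ _ => f_equal end.

(** [qmat (Quat r x y z) = r * 1 + i (x sx + y sy + z sz)]. *)
Definition qmat (p : quat) : M2 :=
  mkM (mkC (qr p) (qk p)) (mkC (qj p) (qi p)) (mkC (- qj p) (qi p)) (mkC (qr p) (- qk p)).

Definition qmul (p q : quat) : quat :=
  Quat (qr p * qr q - qi p * qi q - qj p * qj q - qk p * qk q)
       (qr p * qi q + qi p * qr q - (qj p * qk q - qk p * qj q))
       (qr p * qj q + qj p * qr q - (qk p * qi q - qi p * qk q))
       (qr p * qk q + qk p * qr q - (qi p * qj q - qj p * qi q)).
Definition qbar (p : quat) : quat := Quat (qr p) (- qi p) (- qj p) (- qk p).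
Definition qnorm2 (p : quat) : R := qr p ^ 2 + qi p ^ 2 + qj p ^ 2 + qk p ^ 2.
Definition qscale (s : R) (p : quat) : quat :=
  Quat (s * qr p) (s * qi p) (s * qj p) (s * qk p).
Definition qone : quat := Quat 1 0 0 0.

Lemma qmat_mul p q : Mmul (qmat p) (qmat q) = qmat (qmul p q).
Proof. destruct p, q; unfold Mmul, qmat, qmul, Cadd, Cmul; simpl; split_fields; ring. Qed.

Lemma qmat_inv p : qnorm2 p = 1 -> Minv (qmat p) = qmat (qbar p).
Proof.
  destruct p as [r x y z]; unfold qnorm2, Minv, Mscale, Cinv, Mdet, qmat, qbar, Cadd, Cmul, Copp;
    simpl; intro N.
  replace (r * r - z * - z + - (y * - y - x * x)) with 1 by (rewrite <- N; ring).
  replace (r * - z + z * r + - (y * x + x * - y)) with 0 by ring.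
  split_fields; field.
Qed.

Lemma qmat_SU2 p : qnorm2 p = 1 -> is_SU2 (qmat p).
Proof.
  destruct p as [r x y z];
    unfold qnorm2, is_SU2, Mmul, Madj, Mdet, Mid, CR, qmat, Cadd, Cmul, Copp, Cconj; simpl.
  intro N; split; split_fields; try nra; ring.
Qed.

Lemma qmat_inj p q : qmat p = qmat q -> p = q.
Proof. destruct p, q; unfold qmat; intro E; injection E; intros; simpl in *; f_equal; lra. Qed.

Lemma SU2_is_qmat g : is_SU2 g -> exists p, g = qmat p /\ qnorm2 p = 1.
Proof.
  destruct g as [[a1 a2] [b1 b2] [c1 c2] [d1 d2]].
  unfold is_SU2, Mmul, Madj, Mdet, Mid, CR, Cadd, Cmul, Copp, Cconj; simpl.
  intros [Hunit Hdet]; injection Hunit; injection Hdet; intros; simpl in *.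
  assert (d1 = a1) by nsatz.
  assert (d2 = - a2) by nsatz.
  assert (c1 = - b1) by nsatz.
  assert (c2 = b2) by nsatz.
  subst; exists (Quat a1 b2 b1 a2); split.
  - unfold qmat; simpl; split_fields; ring.
  - unfold qnorm2; simpl; nra.
Qed.

Lemma qmul_assoc p q s : qmul (qmul p q) s = qmul p (qmul q s).
Proof. destruct p, q, s; unfold qmul; simpl; split_quat; ring. Qed.
Lemma qbar_mul p q : qbar (qmul p q) = qmul (qbar q) (qbar p).
Proof. destruct p, q; unfold qmul, qbar; simpl; split_quat; ring. Qed.
Lemma qnorm2_mul p q : qnorm2 (qmul p q) = qnorm2 p * qnorm2 q.
Proof. destruct p, q; unfold qmul, qnorm2; simpl; ring. Qed.
Lemma qnorm2_bar p : qnorm2 (qbar p) = qnorm2 p.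
Proof. destruct p; unfold qnorm2, qbar; simpl; ring. Qed.
Lemma qnorm2_scale s p : qnorm2 (qscale s p) = s ^ 2 * qnorm2 p.
Proof. destruct p; unfold qscale, qnorm2; simpl; ring. Qed.
Lemma qmul_1_l p : qmul qone p = p.
Proof. destruct p; unfold qmul, qone; simpl; split_quat; ring. Qed.
Lemma qmul_1_r p : qmul p qone = p.
Proof. destruct p; unfold qmul, qone; simpl; split_quat; ring. Qed.
Lemma qmul_bar_r p : qnorm2 p = 1 -> qmul p (qbar p) = qone.
Proof.
  destruct p; unfold qmul, qnorm2, qbar, qone; simpl; intro N; split_quat; try ring;
    rewrite <- N; ring.
Qed.
Lemma qmul_bar_l p : qnorm2 p = 1 -> qmul (qbar p) p = qone.
Proof.
  destruct p; unfold qmul, qnorm2, qbar, qone; simpl; intro N; split_quat; try ring;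
    rewrite <- N; ring.
Qed.
Lemma qmul_scale_l s p q : qmul (qscale s p) q = qscale s (qmul p q).
Proof. destruct p, q; unfold qmul, qscale; simpl; split_quat; ring. Qed.
Lemma qmul_scale_r s p q : qmul p (qscale s q) = qscale s (qmul p q).
Proof. destruct p, q; unfold qmul, qscale; simpl; split_quat; ring. Qed.
Lemma qscale_scale s s' p : qscale s (qscale s' p) = qscale (s * s') p.
Proof. destruct p; unfold qscale; simpl; split_quat; ring. Qed.
Lemma qscale_1 p : qscale 1 p = p.
Proof. destruct p; unfold qscale; simpl; split_quat; ring. Qed.

Lemma qmul_cancel_bar p q : qnorm2 p = 1 -> qmul p (qmul (qbar p) q) = q.
Proof. intro N; rewrite <- qmul_assoc, qmul_bar_r, qmul_1_l; auto. Qed.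
Lemma qmul_bar_cancel p q : qnorm2 p = 1 -> qmul (qbar p) (qmul p q) = q.
Proof. intro N; rewrite <- qmul_assoc, qmul_bar_l, qmul_1_l; auto. Qed.

Lemma Mid_qmat : Mid = qmat qone.
Proof. unfold Mid, qmat, qone, CR; cbn; split_fields; ring. Qed.
Lemma isig_qmat x y z : isig x y z = qmat (Quat 0 x y z).
Proof.
  unfold isig, qmat, Mscale, Madd, sigma_x, sigma_y, sigma_z, Ci, CR, Cadd, Cmul, Copp; cbn;
    split_fields; ring.
Qed.
Lemma Mtr_qmat p : Mtr (qmat p) = CR (2 * qr p).
Proof. destruct p; unfold Mtr, qmat, CR, Cadd; cbn; split_fields; ring. Qed.
Lemma scalar_plus_qmat s q :
  Madd (Mscale (CR s) Mid) (qmat q) = qmat (Quat (s + qr q) (qi q) (qj q) (qk q)).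
Proof. destruct q; unfold qmat, Mscale, Madd, Mid, CR, Cadd, Cmul; cbn; split_fields; ring. Qed.
Lemma A_norm_qmat r al :
  A_norm r al = qmat (Quat (r * cos al) (sqrt (1 - r ^ 2)) 0 (r * sin al)).
Proof. unfold A_norm; rewrite isig_qmat, scalar_plus_qmat; cbn; rewrite Rplus_0_r; reflexivity. Qed.
Lemma B_norm_qmat be : B_norm be = qmat (Quat (cos be) 0 0 (sin be)).
Proof. unfold B_norm; rewrite isig_qmat, scalar_plus_qmat; cbn; rewrite Rplus_0_r; reflexivity. Qed.

(** ** Conjugation as a rotation *)

Definition qact (g p : quat) : quat := qmul (qmul g p) (qbar g).

Lemma conjM_qmat g p : qnorm2 g = 1 -> conjM (qmat g) (qmat p) = qmat (qact g p).
Proof. intro N; unfold conjM, qact; rewrite qmat_inv, !qmat_mul; auto. Qed.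

Definition qtup (A B a b : quat) : Tup := mkT (qmat A) (qmat B) (qmat a) (qmat b).

Lemma conjT_qtup g A B a b : qnorm2 g = 1 ->
  conjT (qmat g) (qtup A B a b) = qtup (qact g A) (qact g B) (qact g a) (qact g b).
Proof. intro N; unfold conjT, qtup; simpl; rewrite !conjM_qmat; auto. Qed.

Lemma qtup_inj A B a b A' B' a' b' :
  qtup A B a b = qtup A' B' a' b' -> A = A' /\ B = B' /\ a = a' /\ b = b'.
Proof.
  intro E; repeat split; apply qmat_inj;
    [apply (f_equal tA E) | apply (f_equal tB E) | apply (f_equal ta E) | apply (f_equal tb E)].
Qed.

Lemma qact_mul g p q : qnorm2 g = 1 -> qact g (qmul p q) = qmul (qact g p) (qact g q).
Proof. intro N; unfold qact; rewrite !qmul_assoc, (qmul_bar_cancel g); auto. Qed.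
Lemma qact_comp g h p : qact g (qact h p) = qact (qmul g h) p.
Proof. unfold qact; rewrite qbar_mul, !qmul_assoc; reflexivity. Qed.
Lemma qnorm2_act g p : qnorm2 g = 1 -> qnorm2 (qact g p) = qnorm2 p.
Proof. intro N; unfold qact; rewrite !qnorm2_mul, qnorm2_bar, N; ring. Qed.

(** [c + s k] with [c = cos w], [s = sin w] rotates the (i,j)-plane by [-2w]. *)
Lemma qact_zrot c s v : c ^ 2 + s ^ 2 = 1 ->
  qact (Quat c 0 0 s) v =
  Quat (qr v) ((c ^ 2 - s ^ 2) * qi v + 2 * c * s * qj v)
       (- (2 * c * s * qi v) + (c ^ 2 - s ^ 2) * qj v) (qk v).
Proof. destruct v; unfold qact, qmul, qbar; simpl; intro N; split_quat; try ring; nsatz. Qed.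

(** [(1 + j) / sqrt 2] is a quarter turn about the j-axis. *)
Lemma qact_yquarter r v : 2 * r ^ 2 = 1 -> qact (Quat r 0 r 0) v = Quat (qr v) (- qk v) (qj v) (qi v).
Proof. destruct v; unfold qact, qmul, qbar; simpl; intro N; split_quat; try ring; nsatz. Qed.

Lemma fixes_k_zrot g : qnorm2 g = 1 -> qact g (Quat 0 0 0 1) = Quat 0 0 0 1 ->
  qi g = 0 /\ qj g = 0.
Proof.
  destruct g as [c x y z]; unfold qnorm2, qact, qmul, qbar; simpl; intros N E.
  injection E; intros; nra.
Qed.

(** Pythagoras with integer powers, as [nsatz] expects. *)
Lemma cos_sin_sq x : cos x ^ 2 + sin x ^ 2 = 1.
Proof. pose proof (sin2_cos2 x) as E; unfold Rsqr in E; lra. Qed.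

Lemma sin_ne0_off_PI t : 0 < t < 2 * PI -> t <> PI -> sin t <> 0.
Proof.
  intros Ht Hn. destruct (Rlt_or_le t PI).
  - pose proof (sin_gt_0 t ltac:(lra) ltac:(lra)); lra.
  - pose proof (sin_lt_0 t ltac:(lra) ltac:(lra)); lra.
Qed.

Lemma angle_eq t1 t2 : 0 < t1 < 2 * PI -> 0 < t2 < 2 * PI -> sin t1 <> 0 ->
  cos t1 = cos t2 -> sin t1 = sin t2 -> t1 = t2.
Proof.
  intros H1 H2 Hs Ec Es. destruct (Rdichotomy _ _ Hs) as [Hneg|Hpos].
  - assert (PI < t1) by (destruct (Rle_or_lt t1 PI); [pose proof (sin_ge_0 t1); lra|auto]).
    assert (PI < t2) by (destruct (Rle_or_lt t2 PI); [pose proof (sin_ge_0 t2); lra|auto]).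
    assert (t1 - PI = t2 - PI); [|lra].
    apply cos_inj; try lra. rewrite !cos_minus, cos_PI, sin_PI, Ec; ring.
  - assert (t1 < PI) by (destruct (Rle_or_lt PI t1); [pose proof (sin_le_0 t1); lra|auto]).
    assert (t2 < PI) by (destruct (Rle_or_lt PI t2); [pose proof (sin_le_0 t2); lra|auto]).
    apply cos_inj; lra.
Qed.

(** [r = 1 / sqrt 2], giving the quarter turn [r + r j]. *)
Lemma sqrt_half_exists : exists r, 2 * r ^ 2 = 1.
Proof.
  exists (/ sqrt 2). pose proof (sqrt_sqrt 2 ltac:(lra)) as E. pose proof (sqrt_lt_R0 2 ltac:(lra)).
  rewrite <- E at 1. field. lra.
Qed.

Lemma half_angle C S : C ^ 2 + S ^ 2 = 1 ->
  exists c s, c ^ 2 + s ^ 2 = 1 /\ c ^ 2 - s ^ 2 = C /\ 2 * c * s = S.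
Proof.
  intro N. destruct (Req_dec C (-1)) as [E|E].
  - exists 0, 1; subst; repeat split; nra.
  - assert (P : 0 < (1 + C) / 2) by nra.
    pose proof (sqrt_lt_R0 _ P) as Hc_pos.
    pose proof (sqrt_sqrt _ (Rlt_le _ _ P)) as Hc_sq.
    set (c := sqrt ((1 + C) / 2)) in *.
    assert (Hc2 : 2 * (c * c) = 1 + C) by (rewrite Hc_sq; field).
    set (s := S / (2 * c)).
    assert (Hs : s * (2 * c) = S) by (unfold s; field; lra).
    clearbody s c; clear Hc_sq.
    exists c, s; repeat split.
    + apply (Rmult_eq_reg_l (4 * c ^ 2)); [|nra]. clear E P Hc_pos. nsatz_pow.
    + apply (Rmult_eq_reg_l (4 * c ^ 2)); [|nra]. clear E P Hc_pos. nsatz_pow.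
    + rewrite <- Hs; ring.
Qed.

Lemma polar_angle u v : u ^ 2 + v ^ 2 = 1 ->
  exists al, 0 <= al <= 2 * PI /\ cos al = u /\ sin al = v.
Proof.
  intro N. assert (Hu : -1 <= u <= 1) by nra.
  pose proof (acos_bound u). pose proof (cos_acos u Hu) as Hcos. pose proof (sin_acos u Hu) as Hsin.
  assert (E : sqrt (1 - u²) = Rabs v).
  { replace (1 - u²) with (v²) by (unfold Rsqr; simpl in N; lra). apply sqrt_Rsqr_abs. }
  rewrite E in Hsin. pose proof PI_RGT_0.
  destruct (Rle_or_lt 0 v) as [Hv|Hv].
  - exists (acos u); rewrite Rabs_pos_eq in Hsin by auto; repeat split; lra.
  - exists (2 * PI - acos u); rewrite Rabs_left in Hsin by auto.
    rewrite cos_minus, sin_minus, cos_2PI, sin_2PI. repeat split; [lra|lra|rewrite Hcos; ring|rewrite Hsin; ring].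
Qed.

Lemma A_norm_exists q : qnorm2 q = 1 -> qj q = 0 -> 0 < qi q ->
  exists r al, 0 <= al <= 2 * PI /\ 0 <= r < 1 /\ qmat q = A_norm r al.
Proof.
  destruct q as [a x y z]; unfold qnorm2; cbn; intros N Hy Hx; subst y.
  set (r := sqrt (a ^ 2 + z ^ 2)).
  assert (Hr2 : r * r = a ^ 2 + z ^ 2) by (apply sqrt_sqrt; nra).
  assert (Hr0 : 0 <= r) by apply sqrt_pos.
  assert (Hx' : sqrt (1 - r ^ 2) = x).
  { replace (1 - r ^ 2) with (x²) by (unfold Rsqr; simpl; lra). rewrite sqrt_Rsqr; lra. }
  assert (Hr1 : r < 1) by nra.
  destruct (Req_dec r 0) as [E|E].
  - exists 0, 0. split; [pose proof PI_RGT_0; lra|]. split; [lra|].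
    rewrite E in *. rewrite A_norm_qmat, Hx', cos_0, sin_0. f_equal. split_quat; nra.
  - destruct (polar_angle (a / r) (z / r)) as [al [Hal [Hc Hs]]].
    { field_simplify; [|auto]. replace (r ^ 2) with (r * r) by ring. rewrite Hr2. field.
      intro; apply E; nra. }
    exists r, al; repeat split; try lra.
    rewrite A_norm_qmat, Hx', Hc, Hs. f_equal; split_quat; field; auto.
Qed.

(** ** The stabilizer of a normal-form pair is trivial *)

Lemma conj_fixes_k H cn sn cb sb : qnorm2 H = 1 -> 0 < sn -> 0 < sb ->
  qact H (Quat cn 0 0 sn) = Quat cb 0 0 sb -> qact H (Quat 0 0 0 1) = Quat 0 0 0 1.
Proof.
  destruct H as [c x y z]; unfold qnorm2, qact, qmul, qbar; simpl; intros N Hsn Hsb E.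
  injection E; intros Ek Ej Ei Er.
  assert (Hu : sn * (2 * (x * z - c * y)) = 0) by nsatz_pow.
  assert (Hv : sn * (2 * (y * z + c * x)) = 0) by nsatz_pow.
  assert (Hw : sn * (c ^ 2 + z ^ 2 - x ^ 2 - y ^ 2) = sb) by nsatz_pow.
  assert (Hu0 : 2 * (x * z - c * y) = 0) by nra.
  assert (Hv0 : 2 * (y * z + c * x) = 0) by nra.
  (* the image of [k] is a unit vector *)
  assert (Hunit : (2 * (x * z - c * y)) ^ 2 + (2 * (y * z + c * x)) ^ 2
                  + (c ^ 2 + z ^ 2 - x ^ 2 - y ^ 2) ^ 2 = 1) by (clear - N; nsatz_pow).
  assert (Hw1 : c ^ 2 + z ^ 2 - x ^ 2 - y ^ 2 = 1) by nra.
  clear - N Hu0 Hv0 Hw1; split_quat; nsatz_pow.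
Qed.

Lemma zrot_keeping_halfplane c z A : c ^ 2 + z ^ 2 = 1 -> qj A = 0 -> 0 < qi A ->
  qj (qact (Quat c 0 0 z) A) = 0 -> 0 < qi (qact (Quat c 0 0 z) A) ->
  forall X, qact (Quat c 0 0 z) X = X.
Proof.
  intros N HAj HAi Hj Hi.
  rewrite (qact_zrot c z A N) in Hj, Hi; cbn in Hj, Hi; rewrite HAj in Hj, Hi.
  assert (Hcz : (2 * c * z) * qi A = 0) by lra.
  assert (Hz : z = 0).
  { destruct (Rmult_integral _ _ Hcz) as [H2cz|HA0]; [|lra].
    destruct (Rmult_integral _ _ H2cz) as [H2c|Hz0]; auto.
    destruct (Rmult_integral _ _ H2c) as [H2|Hc0]; [lra|subst c; nra]. }
  subst z; intro X; rewrite (qact_zrot c 0 X N).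
  assert (c ^ 2 = 1) by nra.
  destruct X; cbn; split_quat; nsatz_pow.
Qed.

Lemma normal_form_stabilizer H A0 cn sn cb sb : qnorm2 H = 1 -> 0 < sn -> 0 < sb ->
  qact H (Quat cn 0 0 sn) = Quat cb 0 0 sb -> qj A0 = 0 -> 0 < qi A0 ->
  qj (qact H A0) = 0 -> 0 < qi (qact H A0) -> forall X, qact H X = X.
Proof.
  intros N Hsn Hsb EB HAj HAi Hj Hi.
  destruct (fixes_k_zrot H N (conj_fixes_k H cn sn cb sb N Hsn Hsb EB)) as [Hx Hy].
  destruct H as [c x y z]; cbn in Hx, Hy; subst x y.
  assert (Nc : c ^ 2 + z ^ 2 = 1) by (unfold qnorm2 in N; cbn in N; nra).
  exact (zrot_keeping_halfplane c z A0 Nc HAj HAi Hj Hi).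
Qed.

(** ** The sphere Lagrangian in quaternion coordinates *)

Section SphereLagrangian.

Variables eps phi theta : R.

Definition nu := L_nu eps phi.
Definition cnu := cos nu.
Definition snu := sin nu.
Definition cph := cos phi.
Definition sph := sin phi.
Definition cth := cos theta.
Definition sth := sin theta.
Definition D := L_D eps phi theta.
Definition kD := / sqrt D.

(** With [n = cth i + sth j]: [A = h (cph + sph n)], [B = cnu + snu n], [a = k],
    [b = - h a^-1 h^-1]. *)
Definition hq := Quat 0 (kD * cnu) 0 (kD * - (snu * sth)).
Definition Pq := Quat cph (sph * cth) (sph * sth) 0.
Definition Bq := Quat cnu (snu * cth) (snu * sth) 0.
Definition aq := Quat 0 0 0 1.
Definition Aq := qmul hq Pq.
Definition bq := qscale (-1) (qact hq (qbar aq)).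

Lemma D_eq : D = cnu ^ 2 + snu ^ 2 * sth ^ 2.
Proof. reflexivity. Qed.

Hypothesis Heps : 0 < eps < 1.
Hypothesis Hphi : 0 < phi < PI.

(** Since [0 < nu < 1 < PI / 2], both [cos nu] and [sin nu] are positive,
    hence so is [D]. *)
Lemma sph_pos : 0 < sph.
Proof. apply sin_gt_0; apply Hphi. Qed.
Lemma nu_bounds : 0 < nu < 1.
Proof.
  unfold nu, L_nu. pose proof sph_pos. pose proof (SIN_bound phi). unfold sph in *. split; nra.
Qed.
Lemma cnu_pos : 0 < cnu.
Proof. pose proof nu_bounds. pose proof PI2_1. apply cos_gt_0; lra. Qed.
Lemma snu_pos : 0 < snu.
Proof. pose proof nu_bounds. pose proof PI2_1. apply sin_gt_0; lra. Qed.
Lemma D_pos : 0 < D.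
Proof. rewrite D_eq. pose proof cnu_pos. nra. Qed.
Lemma kD_pos : 0 < kD.
Proof. apply Rinv_0_lt_compat, sqrt_lt_R0, D_pos. Qed.
Lemma kD_sq : kD ^ 2 * D = 1.
Proof.
  unfold kD. pose proof D_pos as HD. pose proof (sqrt_sqrt D (Rlt_le _ _ HD)) as E.
  pose proof (sqrt_lt_R0 D HD). rewrite <- E at 2. field. lra.
Qed.

Lemma qnorm2_hq : qnorm2 hq = 1.
Proof. unfold qnorm2, hq; cbn [qr qi qj qk]. rewrite <- kD_sq, D_eq. ring. Qed.
Lemma qnorm2_Pq : qnorm2 Pq = 1.
Proof.
  unfold qnorm2, Pq; cbn [qr qi qj qk]. pose proof (cos_sin_sq theta). pose proof (cos_sin_sq phi).
  unfold cph, sph, cth, sth. nsatz_pow.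
Qed.
Lemma qnorm2_Bq : qnorm2 Bq = 1.
Proof.
  unfold qnorm2, Bq; cbn [qr qi qj qk]. pose proof (cos_sin_sq theta). pose proof (cos_sin_sq nu).
  unfold cnu, snu, cth, sth. nsatz_pow.
Qed.
Lemma qnorm2_aq : qnorm2 aq = 1.
Proof. unfold qnorm2, aq; cbn [qr qi qj qk]; ring. Qed.
Lemma qnorm2_Aq : qnorm2 Aq = 1.
Proof. unfold Aq; rewrite qnorm2_mul, qnorm2_hq, qnorm2_Pq; ring. Qed.
Lemma qnorm2_bq : qnorm2 bq = 1.
Proof. unfold bq; rewrite qnorm2_scale, qnorm2_act, qnorm2_bar, qnorm2_aq; [ring | apply qnorm2_hq]. Qed.

Lemma L_s_qtup : L_s eps phi theta = qtup Aq Bq aq bq.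
Proof.
  assert (Eh : forall k u w, Mscale (CR k) (Madd (Mscale (CR u) (Mscale Ci sigma_x))
                 (Mscale (CR w) (Mscale Ci sigma_z))) = qmat (Quat 0 (k * u) 0 (k * w))).
  { intros; cbv; split_fields; ring. }
  assert (Ea : Mscale Ci sigma_z = qmat aq) by (cbv; split_fields; ring).
  assert (En : forall x y c s, Madd (Mscale (CR x) Mid) (Mscale (Cmul Ci (CR y))
                 (Madd (Mscale (CR c) sigma_x) (Mscale (CR s) sigma_y)))
               = qmat (Quat x (y * c) (y * s) 0)).
  { intros; cbv; split_fields; ring. }
  assert (Es : forall r p, Mscale (CR r) (qmat p) = qmat (qscale r p)).
  { intros r [p0 p1 p2 p3]; cbv; split_fields; ring. }
  unfold L_s; cbv zeta. rewrite Eh, Ea, !En.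
  rewrite qmat_mul, !qmat_inv, !qmat_mul, Es by (apply qnorm2_hq || apply qnorm2_aq).
  reflexivity.
Qed.

(** [P] and [B] lie on the same one-parameter subgroup, so they commute. *)
Lemma Pq_Bq_commute : qmul Pq Bq = qmul Bq Pq.
Proof. unfold Pq, Bq, qmul; cbn [qr qi qj qk]; split_quat; ring. Qed.

(** Conjugating [h^-1] by [B] or by [a] gives opposite results; this is what
    makes [b] close up the relation. *)
Lemma Bq_conj_hinv : qact Bq (qbar hq) = qscale (-1) (qact aq (qbar hq)).
Proof.
  pose proof (cos_sin_sq nu); pose proof (cos_sin_sq theta).
  unfold qact, Bq, hq, aq, qmul, qbar, qscale, cnu, snu, cth, sth; cbn [qr qi qj qk];
    split_quat; nsatz_pow.
Qed.

(** The commutator [[A, B] = h B h^-1 B^-1], since [P] commutes with [B]. *)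
Lemma commutator_q : qmul (qmul Aq Bq) (qmul (qbar Aq) (qbar Bq)) = qmul hq (qact Bq (qbar hq)).
Proof.
  pose proof qnorm2_Pq.
  unfold Aq, qact. rewrite !qbar_mul, !qmul_assoc, <- (qmul_assoc Pq Bq), Pq_Bq_commute,
    !qmul_assoc, (qmul_cancel_bar Pq) by auto.
  reflexivity.
Qed.

Lemma L_s_relation : qmul (qmul (qmul (qmul Aq Bq) (qmul (qbar Aq) (qbar Bq))) aq) bq = qone.
Proof.
  pose proof qnorm2_hq; pose proof qnorm2_aq.
  rewrite commutator_q, Bq_conj_hinv. unfold bq, qact.
  rewrite !qmul_scale_r, !qmul_scale_l, qscale_scale, !qmul_assoc, (qmul_bar_cancel aq),
    (qmul_bar_cancel hq), (qmul_cancel_bar aq), qmul_bar_r by auto.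
  replace (-1 * -1) with 1 by ring. apply qscale_1.
Qed.

Lemma L_s_in_RT2 : in_RT2 (L_s eps phi theta).
Proof.
  rewrite L_s_qtup; unfold in_RT2, qtup; cbn [tA tB ta tb].
  repeat split; try apply qmat_SU2;
    try solve [apply qnorm2_Aq | apply qnorm2_Bq | apply qnorm2_aq | apply qnorm2_bq];
    try solve [rewrite Mtr_qmat; unfold bq, hq, aq, qact, qmul, qbar, qscale;
               cbn [qr qi qj qk]; f_equal; ring].
  unfold Defs.comm; rewrite !qmat_inv by (apply qnorm2_Aq || apply qnorm2_Bq).
  rewrite !qmat_mul, L_s_relation, Mid_qmat; reflexivity.
Qed.

Lemma one_minus_mu : 1 - mu (L_s eps phi theta) = 2 * snu ^ 2 * kD ^ 2 * sth ^ 2.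
Proof.
  unfold mu; rewrite L_s_qtup; unfold qtup, Defs.comm; cbn [tA tB].
  rewrite !qmat_inv by (apply qnorm2_Aq || apply qnorm2_Bq).
  rewrite !qmat_mul, commutator_q, Mtr_qmat; unfold CR; cbn [Re].
  unfold Rdiv; rewrite Rmult_comm, <- Rmult_assoc, Rinv_l, Rmult_1_l by lra.
  pose proof kD_sq as K; rewrite D_eq in K.
  pose proof (cos_sin_sq nu); pose proof (cos_sin_sq theta); fold cnu snu cth sth in *.
  unfold hq, Bq, qact, qmul, qbar; cbn [qr qi qj qk]. nsatz_pow.
Qed.

(** Off the poles of [{y = 0}] we have [0 < 1 - mu <= 2], i.e. [-1 <= mu < 1]. *)
Lemma L_s_in_P4 : sth <> 0 -> in_P4 (L_s eps phi theta).
Proof.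
  intro Hs. split; [apply L_s_in_RT2|].
  pose proof one_minus_mu; pose proof snu_pos; pose proof kD_pos; pose proof cnu_pos.
  pose proof kD_sq as K; rewrite D_eq in K.
  assert (0 < sth ^ 2) by (destruct (Rdichotomy _ _ Hs); nra).
  assert (0 < snu ^ 2) by (apply pow_lt; lra).
  assert (0 < kD ^ 2) by (apply pow_lt; lra).
  assert (0 < snu ^ 2 * kD ^ 2 * sth ^ 2) by (apply Rmult_lt_0_compat; [apply Rmult_lt_0_compat|]; assumption).
  assert (0 <= kD ^ 2 * cnu ^ 2) by (apply Rmult_le_pos; apply pow2_ge_0).
  split; nra.
Qed.

(** ** The normalized representative *)

(** The normal form of [L_s]; [sg = +1] for [theta in (0, PI)], [sg = -1]
    for [theta in (PI, 2 PI)] (the sign of [sin theta]). *)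
Definition A_nf (sg : R) := Quat (- (kD * cnu * sph * cth)) (kD * (sg * sth)) 0 (kD * cph * cnu * cth).
Definition B_nf := Quat cnu 0 0 snu.
Definition a_nf (sg : R) := Quat 0 (- (sg * sin (phi + nu))) (- (sg * cos (phi + nu))) 0.
Definition b_nf (sg : R) :=
  Quat 0 (sg * (kD ^ 2 * (cnu ^ 2 * cth ^ 2 * sin (phi + nu) + sth ^ 2 * sin (phi - nu))))
       (sg * (kD ^ 2 * (cnu ^ 2 * cth ^ 2 * cos (phi + nu) + sth ^ 2 * cos (phi - nu))))
       (kD ^ 2 * (- (1 / 2) * sin (2 * nu) * sin (2 * theta))).

(** An explicit conjugator to the normal form: a z-rotation carries the
    common axis [n] of [P] and [B] to the i-axis, a quarter turn about j
    carries it on to the k-axis, and a last z-rotation moves the image of [a]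
    to [a_nf sg]. *)
Lemma normalizing_conjugator (sg : R) : sg ^ 2 = 1 ->
  exists G, qnorm2 G = 1 /\ qact G Aq = A_nf sg /\ qact G Bq = B_nf /\
            qact G aq = a_nf sg /\ qact G bq = b_nf sg.
Proof.
  intro Hsg.
  destruct (half_angle cth sth (cos_sin_sq theta)) as [c1 [s1 [N1 [C1 S1]]]].
  assert (N3' : (sg * sin (phi + nu)) ^ 2 + (- (sg * cos (phi + nu))) ^ 2 = 1).
  { pose proof (cos_sin_sq (phi + nu)) as Tpn. clear - Hsg Tpn. nsatz_pow. }
  destruct (half_angle _ _ N3') as [c3 [s3 [N3 [C3 S3]]]].
  destruct sqrt_half_exists as [r R2].
  exists (qmul (Quat c3 0 0 s3) (qmul (Quat r 0 r 0) (Quat c1 0 0 s1))).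
  assert (Hcomp : forall X, qact (qmul (Quat c3 0 0 s3) (qmul (Quat r 0 r 0) (Quat c1 0 0 s1))) X =
    qact (Quat c3 0 0 s3) (qact (Quat r 0 r 0) (qact (Quat c1 0 0 s1) X))).
  { intro; rewrite !qact_comp, qmul_assoc; reflexivity. }
  split; [rewrite !qnorm2_mul; unfold qnorm2; cbn [qr qi qj qk]; nsatz_pow|].
  rewrite !Hcomp, !(qact_zrot c1 s1 _ N1), !(qact_yquarter r _ R2), !(qact_zrot c3 s3 _ N3).
  pose proof (cos_sin_sq nu) as Tn; pose proof (cos_sin_sq phi) as Tp.
  pose proof (cos_sin_sq theta) as Tt; pose proof kD_sq as K; rewrite D_eq in K.
  unfold Aq, Bq, bq, aq, hq, Pq, qact, qscale, qmul, qbar; cbn [qr qi qj qk].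
  rewrite C1, S1, C3, S3.
  unfold A_nf, B_nf, a_nf, b_nf.
  rewrite sin_plus, cos_plus, sin_minus, cos_minus, !sin_2a.
  unfold cnu, snu, cph, sph, cth, sth in *.
  replace (- (1 / 2) * (2 * sin nu * cos nu) * (2 * sin theta * cos theta))
    with (- (2 * sin nu * cos nu * sin theta * cos theta)) by field.
  clear Hcomp N3' C1 S1 C3 S3.
  repeat split; split_quat; clear - Hsg Tn Tp Tt K N1 N3 R2; nsatz_pow.
Qed.

(** The conjugate of [L_s] by the normalizing conjugator is normalized: its
    [A] has [j = 0] and positive i-component [kD |sin theta|]. *)
Lemma normalized_rep_exists (sg : R) : sg ^ 2 = 1 -> 0 < sg * sth ->
  exists t', normalized_rep (L_s eps phi theta) t'.
Proof.
  intros Hsg Hs.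
  destruct (normalizing_conjugator sg Hsg) as [G [NG [GA [GB [Ga Gb]]]]].
  exists (qtup (A_nf sg) B_nf (a_nf sg) (b_nf sg)). split.
  - exists (qmat G); split; [apply qmat_SU2; auto|].
    rewrite L_s_qtup, conjT_qtup, GA, GB, Ga, Gb by auto; reflexivity.
  - destruct (A_norm_exists (A_nf sg)) as [r [al [Hal [Hr EA]]]].
    + rewrite <- GA, qnorm2_act; auto; apply qnorm2_Aq.
    + reflexivity.
    + apply Rmult_lt_0_compat; [apply kD_pos | auto].
    + pose proof nu_bounds; pose proof PI2_1.
      exists al, nu, r; repeat split; try lra; auto.
      unfold qtup; cbn [tB]; rewrite B_norm_qmat; reflexivity.
Qed.

(** Any normalized representative is obtained by the conjugator above,
    up to the (trivial) stabilizer of the normal form. *)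
Lemma normalized_rep_unique (sg : R) : sg ^ 2 = 1 -> 0 < sg * sth ->
  forall t', normalized_rep (L_s eps phi theta) t' -> ta t' = qmat (a_nf sg) /\ tb t' = qmat (b_nf sg).
Proof.
  intros Hsg Hs t' [[g [Hg Eg]] [al [be [r [Hal [Hbe [Hr [EA EB]]]]]]]].
  destruct (normalizing_conjugator sg Hsg) as [G [NG [GA [GB [Ga Gb]]]]].
  destruct (SU2_is_qmat g Hg) as [G' [-> NG']].
  rewrite L_s_qtup, conjT_qtup in Eg by auto; subst t'; unfold qtup in *; cbn [tA tB ta tb] in *.
  rewrite A_norm_qmat in EA; rewrite B_norm_qmat in EB; apply qmat_inj in EA, EB.
  (* [G' = H G] where [H] stabilizes the normal form *)
  set (H := qmul G' (qbar G)).
  assert (NH : qnorm2 H = 1) by (unfold H; rewrite qnorm2_mul, qnorm2_bar, NG, NG'; ring).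
  assert (HG : forall X, qact G' X = qact H (qact G X)).
  { intro X; unfold H; rewrite qact_comp, qmul_assoc, qmul_bar_l, qmul_1_r; auto. }
  assert (Htriv : forall X, qact H X = X).
  { apply (normal_form_stabilizer H (A_nf sg) cnu snu (cos be) (sin be) NH snu_pos).
    - apply sin_gt_0; lra.
    - rewrite <- EB, HG, GB; reflexivity.
    - reflexivity.
    - apply Rmult_lt_0_compat; [apply kD_pos | auto].
    - rewrite <- GA, <- HG, EA; reflexivity.
    - rewrite <- GA, <- HG, EA; cbn [qi]; apply sqrt_lt_R0; nra. }
  rewrite !HG, !Htriv, Ga, Gb; split; reflexivity.
Qed.

Lemma kD_sq_inv : kD ^ 2 = / D.
Proof.
  pose proof kD_sq; pose proof D_pos.
  apply (Rmult_eq_reg_r D); [rewrite Rinv_l|]; lra.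
Qed.

Lemma normalized_rep_L_s (sg : R) : sg ^ 2 = 1 -> 0 < sg * sth ->
  (exists t', normalized_rep (L_s eps phi theta) t') /\
  (forall t', normalized_rep (L_s eps phi theta) t' ->
     ta t' = isig (- (sg * sin (phi + nu))) (- (sg * cos (phi + nu))) 0 /\
     tb t' = isig
       (sg * (/ D * (cos nu ^ 2 * cos theta ^ 2 * sin (phi + nu) + sin theta ^ 2 * sin (phi - nu))))
       (sg * (/ D * (cos nu ^ 2 * cos theta ^ 2 * cos (phi + nu) + sin theta ^ 2 * cos (phi - nu))))
       (/ D * (- (1 / 2) * sin (2 * nu) * sin (2 * theta)))).
Proof.
  intros Hsg Hs. split; [exact (normalized_rep_exists sg Hsg Hs)|].
  intros t' Hrep; destruct (normalized_rep_unique sg Hsg Hs t' Hrep) as [-> ->].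
  rewrite !isig_qmat, <- kD_sq_inv; split; reflexivity.
Qed.

End SphereLagrangian.

(** ** Injectivity *)

Lemma bq_formula e p t : 0 < e < 1 -> 0 < p < PI ->
  bq e p t = Quat 0 (- (2 * kD e p t ^ 2 * snu e p * cnu e p * sth t)) 0
                    (-1 + 2 * kD e p t ^ 2 * snu e p ^ 2 * sth t ^ 2).
Proof.
  intros He Hp. pose proof (kD_sq e p t He Hp) as K; rewrite D_eq in K.
  unfold bq, hq, aq, qact, qmul, qbar, qscale; cbn [qr qi qj qk]; split_quat; try ring.
  clear - K; nsatz_pow.
Qed.

Lemma hq_depends_on_nu e p1 p2 t : nu e p1 = nu e p2 -> hq e p1 t = hq e p2 t.
Proof. intro E; unfold hq, kD, D, L_D, cnu, snu; fold (nu e p1) (nu e p2); rewrite E; reflexivity. Qed.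

Lemma zrot_matching_B e p1 t1 p2 t2 c z : 0 < e < 1 -> 0 < p1 < PI -> 0 < p2 < PI ->
  c ^ 2 + z ^ 2 = 1 -> qact (Quat c 0 0 z) (Bq e p1 t1) = Bq e p2 t2 ->
  nu e p1 = nu e p2 /\
  cth t2 = (c ^ 2 - z ^ 2) * cth t1 + 2 * c * z * sth t1 /\
  sth t2 = - (2 * c * z) * cth t1 + (c ^ 2 - z ^ 2) * sth t1.
Proof.
  intros He Hp1 Hp2 N E. rewrite (qact_zrot c z _ N) in E; unfold Bq in E; cbn [qr qi qj qk] in E.
  injection E; intros Ej Ei Er.
  assert (Enu : nu e p1 = nu e p2).
  { pose proof (nu_bounds e p1 He Hp1); pose proof (nu_bounds e p2 He Hp2); pose proof PI2_1.
    apply cos_inj; try lra; exact Er. }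
  assert (Esn : snu e p2 = snu e p1) by (unfold snu; rewrite Enu; reflexivity).
  pose proof (snu_pos e p1 He Hp1). rewrite Esn in Ei, Ej.
  split; [exact Enu|]; split; apply (Rmult_eq_reg_l (snu e p1)); lra.
Qed.

Lemma zrot_matching_b e p1 t1 p2 t2 c z : 0 < e < 1 -> 0 < p1 < PI -> 0 < p2 < PI ->
  sth t1 <> 0 -> c ^ 2 + z ^ 2 = 1 ->
  qact (Quat c 0 0 z) (bq e p1 t1) = bq e p2 t2 -> c * z = 0.
Proof.
  intros He Hp1 Hp2 Hs N E.
  rewrite (qact_zrot c z _ N), (bq_formula e p1 t1 He Hp1), (bq_formula e p2 t2 He Hp2) in E.
  apply (f_equal qj) in E; cbn [qi qj] in E.
  pose proof (snu_pos e p1 He Hp1); pose proof (cnu_pos e p1 He Hp1); pose proof (kD_pos e p1 t1 He Hp1).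
  assert (Hb : kD e p1 t1 ^ 2 * snu e p1 * cnu e p1 * sth t1 <> 0).
  { repeat apply Rmult_integral_contrapositive_currified; try apply pow_nonzero; lra. }
  apply (Rmult_eq_reg_r (4 * (kD e p1 t1 ^ 2 * snu e p1 * cnu e p1 * sth t1))); [|intro; lra].
  lra.
Qed.

(** A half turn about k cannot carry [A(p1, t1)] to [A(p2, t2)]: it would
    reverse the sign of the j-component of [P]. *)
Lemma no_half_turn e p1 t1 p2 t2 z : 0 < e < 1 -> 0 < p1 < PI -> 0 < p2 < PI ->
  z ^ 2 = 1 -> nu e p1 = nu e p2 -> cth t2 = - cth t1 -> sth t2 = - sth t1 -> sth t2 <> 0 ->
  qact (Quat 0 0 0 z) (Aq e p1 t1) = Aq e p2 t2 -> False.
Proof.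
  intros He Hp1 Hp2 Hz Enu Ec Es Hs EA.
  assert (N : 0 ^ 2 + z ^ 2 = 1) by lra.
  assert (Ecn : cnu e p2 = cnu e p1) by (unfold cnu; rewrite Enu; reflexivity).
  assert (Esn : snu e p2 = snu e p1) by (unfold snu; rewrite Enu; reflexivity).
  assert (Esp : sph p1 = sph p2).
  { unfold nu, L_nu in Enu; unfold sph; apply (Rmult_eq_reg_l e); lra. }
  assert (Ekd : kD e p2 t2 = kD e p1 t1).
  { unfold kD; rewrite !D_eq, Ecn, Esn, Es; f_equal; f_equal; ring. }
  assert (Eh : qact (Quat 0 0 0 z) (hq e p1 t1) = qscale (-1) (hq e p2 t2)).
  { rewrite (qact_zrot 0 z _ N); unfold hq, qscale; cbn [qr qi qj qk].
    rewrite Ekd, Ecn, Esn, Es; split_quat; rewrite ?Hz; ring. }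
  assert (EP : qact (Quat 0 0 0 z) (Pq p1 t1) = Quat (cph p1) (sph p1 * cth t2) (sph p1 * sth t2) 0).
  { rewrite (qact_zrot 0 z _ N); unfold Pq; cbn [qr qi qj qk].
    rewrite Ec, Es; split_quat; rewrite ?Hz; ring. }
  unfold Aq in EA; rewrite qact_mul, Eh, EP, qmul_scale_l in EA by (unfold qnorm2; cbn; lra).
  apply (f_equal (qmul (qbar (hq e p2 t2)))) in EA.
  rewrite qmul_scale_r, !qmul_bar_cancel in EA by (apply qnorm2_hq; auto).
  apply (f_equal qj) in EA; unfold qscale, Pq in EA; cbn [qj] in EA; rewrite Esp in EA.
  pose proof (sph_pos p2 Hp2). destruct (Rdichotomy _ _ Hs); nra.
Qed.

(** The conjugator fixes [a = k], so it is a z-rotation; [B] forces equal [nu]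
    and rotates [theta1] to [theta2], [b] forces a rotation by [0] or [PI],
    [A] excludes [PI]; for the identity the [P]-factors agree, giving [phi]. *)
Lemma L_s_injective e p1 t1 p2 t2 : 0 < e < 1 -> dom_y_ne0 p1 t1 -> dom_y_ne0 p2 t2 ->
  tequiv (L_s e p1 t1) (L_s e p2 t2) -> p1 = p2 /\ t1 = t2.
Proof.
  intros He [Hp1 [Ht1 Hn1]] [Hp2 [Ht2 Hn2]] [g [Hg Eg]].
  pose proof (sin_ne0_off_PI t1 Ht1 Hn1) as Hs1; pose proof (sin_ne0_off_PI t2 Ht2 Hn2) as Hs2.
  fold (sth t1) in Hs1; fold (sth t2) in Hs2.
  destruct (SU2_is_qmat g Hg) as [G [-> NG]].
  rewrite (L_s_qtup e p1 t1 He Hp1), (L_s_qtup e p2 t2 He Hp2), conjT_qtup in Eg by auto.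
  apply qtup_inj in Eg; destruct Eg as [EA [EB [Ea Eb]]].
  (* the conjugator fixes [a = k], so it is a z-rotation *)
  destruct (fixes_k_zrot G NG Ea) as [Gi Gj].
  destruct G as [c x y z]; cbn [qi qj] in Gi, Gj; subst x y.
  assert (N : c ^ 2 + z ^ 2 = 1) by (unfold qnorm2 in NG; cbn [qr qi qj qk] in NG; nra).
  destruct (zrot_matching_B e p1 t1 p2 t2 c z He Hp1 Hp2 N EB) as [Enu [Ec Es]].
  pose proof (zrot_matching_b e p1 t1 p2 t2 c z He Hp1 Hp2 Hs1 N Eb) as Hcz.
  destruct (Rmult_integral _ _ Hcz) as [Hc|Hz]; subst.
  - (* a half turn is excluded by [A] *)
    assert (Hz2 : z ^ 2 = 1) by nra.
    replace (0 ^ 2 - z ^ 2) with (-1) in Ec, Es by nra.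
    exfalso; apply (no_half_turn e p1 t1 p2 t2 z He Hp1 Hp2); auto; lra.
  - (* the conjugator is trivial *)
    assert (Hc2 : c ^ 2 = 1) by nra.
    replace (c ^ 2 - 0 ^ 2) with 1 in Ec, Es by nra.
    assert (Et : t1 = t2) by (apply angle_eq; auto; unfold cth, sth in *; lra).
    subst t2; split; [|reflexivity].
    assert (Hid : forall X, qact (Quat c 0 0 0) X = X).
    { intro X; rewrite (qact_zrot c 0 X N); destruct X; cbn [qr qi qj qk]; split_quat; nsatz_pow. }
    rewrite Hid in EA; unfold Aq in EA; rewrite (hq_depends_on_nu e p2 p1 t1 (eq_sym Enu)) in EA.
    apply (f_equal (qmul (qbar (hq e p1 t1)))) in EA.
    rewrite !qmul_bar_cancel in EA by (apply qnorm2_hq; auto).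
    apply (f_equal qr) in EA; unfold Pq, cph in EA; cbn [qr] in EA.
    apply cos_inj; lra.
Qed.

Theorem theorem2p15 :
  exists eps0 : R, 0 < eps0 /\
  forall eps : R, 0 < eps < eps0 ->
  (* values in P_4 *)
  (forall phi theta, dom_y_ne0 phi theta -> in_P4 (L_s eps phi theta)) /\
  (* injectivity into R(T^2,2) *)
  (forall phi1 theta1 phi2 theta2,
      dom_y_ne0 phi1 theta1 -> dom_y_ne0 phi2 theta2 ->
      tequiv (L_s eps phi1 theta1) (L_s eps phi2 theta2) ->
      phi1 = phi2 /\ theta1 = theta2) /\
  (* normalized representative, theta in (0,pi) *)
  (forall phi theta, 0 < phi < PI -> 0 < theta < PI ->
      let nu := L_nu eps phi in
      let D := L_D eps phi theta in
      (exists t', normalized_rep (L_s eps phi theta) t') /\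
      (forall t', normalized_rep (L_s eps phi theta) t' ->
         ta t' = isig (- sin (phi + nu)) (- cos (phi + nu)) 0 /\
         tb t' = isig
           (/ D * (cos nu ^ 2 * cos theta ^ 2 * sin (phi + nu)
                   + sin theta ^ 2 * sin (phi - nu)))
           (/ D * (cos nu ^ 2 * cos theta ^ 2 * cos (phi + nu)
                   + sin theta ^ 2 * cos (phi - nu)))
           (/ D * (- (1 / 2) * sin (2 * nu) * sin (2 * theta))))) /\
  (* normalized representative, theta in (pi,2pi) *)
  (forall phi theta, 0 < phi < PI -> PI < theta < 2 * PI ->
      let nu := L_nu eps phi in
      let D := L_D eps phi theta in
      (exists t', normalized_rep (L_s eps phi theta) t') /\
      (forall t', normalized_rep (L_s eps phi theta) t' ->
         ta t' = isig (sin (phi + nu)) (cos (phi + nu)) 0 /\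
         tb t' = isig
           (/ D * (- (cos nu ^ 2 * cos theta ^ 2 * sin (phi + nu))
                   - sin theta ^ 2 * sin (phi - nu)))
           (/ D * (- (cos nu ^ 2 * cos theta ^ 2 * cos (phi + nu))
                   - sin theta ^ 2 * cos (phi - nu)))
           (/ D * (- (1 / 2) * sin (2 * nu) * sin (2 * theta))))).
Proof.
  exists 1; split; [lra|]; intros eps He.
  split; [|split; [|split]].
  - intros phi theta [Hp [Ht Hn]]. apply L_s_in_P4; auto. apply sin_ne0_off_PI; auto.
  - intros; eapply L_s_injective; eauto.
  - intros phi theta Hp Ht; cbv zeta.
    assert (Hs : 0 < 1 * sth theta) by (unfold sth; rewrite Rmult_1_l; apply sin_gt_0; lra).
    destruct (normalized_rep_L_s eps phi theta He Hp 1 ltac:(ring) Hs) as [Hex Hnf].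
    split; [exact Hex|]; intros t' Hrep; destruct (Hnf t' Hrep) as [-> ->].
    unfold nu, D; split; f_equal; ring.
  - intros phi theta Hp Ht; cbv zeta.
    assert (Hs : 0 < -1 * sth theta) by (unfold sth; pose proof (sin_lt_0 theta ltac:(lra) ltac:(lra)); lra).
    destruct (normalized_rep_L_s eps phi theta He Hp (-1) ltac:(ring) Hs) as [Hex Hnf].
    split; [exact Hex|]; intros t' Hrep; destruct (Hnf t' Hrep) as [-> ->].
    unfold nu, D; split; f_equal; ring.
Qed.
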